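(* In the setting where $\mu_0<\mu_1$, $\sigma_H>0$, $\pi,\lambda,p\in(0,1)$ are fixed and $s\in(\mu_0,\mu_1)$, let $A(s)=1-\Phi\big((s-\mu_1)/\sigma_H\big)$, $B(s)=1-\Phi\big((s-\mu_0)/\sigma_H\big)$, \[ e^*=\lambda(1,\pi;s)=\frac{\lambda\,[\pi A+(1-\pi)p]}{\pi\,[\lambda A+(1-\lambda)B]+(1-\pi)\,p},\qquad p_H=\frac{\lambda A}{\lambda A+(1-\lambda)B},\qquad p_L=\lambda, \] and \[ J^+=\log\frac{A}{\lambda A+(1-\lambda)B},\qquad J^-=\log\frac{1-e^*p_H}{1-e^*p_L}. \] Then, holding $(s,\pi,\lambda,p,\mu_0,\mu_1)$ fixed, $\partial_{\sigma_H}J^+<0$ and $\partial_{\sigma_H}J^->0$.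
   Context: Gaussian–quadratic benchmark: $s\mid(\theta,\omega)\sim\mathcal N(\mu_\omega,\sigma_\theta^2)$; the High type recommends risk iff her signal exceeds the cutoff $s$; the Low type recommends risk with signal-independent probability $p$; $p_\theta=\Pr(\omega=1\mid\theta,a=1)$; $e^*$ is the implementer's effort under quadratic cost; $J^+$ and $J^-$ are the log-likelihood-ratio jumps of the type posterior after success and failure following a risky recommendation. *)

From Stdlib Require Import Reals.
From Coquelicot Require Import Coquelicot.
Open Scope R_scope.

Definition phi_std (t : R) : R := exp (- t ^ 2 / 2) / sqrt (2 * PI).

Definition Phi (x : R) : R :=
  RInt_gen phi_std (Rbar_locally m_infty) (at_point x).

Definition Afun (mu1 sH s : R) : R := 1 - Phi ((s - mu1) / sH).
Definition Bfun (mu0 sH s : R) : R := 1 - Phi ((s - mu0) / sH).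

Definition estar (mu0 mu1 pi lam p s sH : R) : R :=
  let A := Afun mu1 sH s in let B := Bfun mu0 sH s in
  lam * (pi * A + (1 - pi) * p) /
  (pi * (lam * A + (1 - lam) * B) + (1 - pi) * p).

Definition pH (mu0 mu1 lam s sH : R) : R :=
  let A := Afun mu1 sH s in let B := Bfun mu0 sH s in
  lam * A / (lam * A + (1 - lam) * B).

Definition pL (lam : R) : R := lam.

Definition Jplus (mu0 mu1 lam s sH : R) : R :=
  let A := Afun mu1 sH s in let B := Bfun mu0 sH s in
  ln (A / (lam * A + (1 - lam) * B)).

Definition Jminus (mu0 mu1 pi lam p s sH : R) : R :=
  let e := estar mu0 mu1 pi lam p s sH in
  ln ((1 - e * pH mu0 mu1 lam s sH) / (1 - e * pL lam)).

From Stdlib Require Import Reals Lra Classical.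
From Coquelicot Require Import Coquelicot.
Open Scope R_scope.

(* Raising [sH] moves both standardized cutoffs [(s - mu_i) / sH] towards [0], so
   [A] decreases and [B] increases.  [J+ = ln (A / (lam A + (1 - lam) B))] increases in [A]
   and decreases in [B], and [J-] does the opposite as long as [A > B]; the chain rule gives
   the two signs.  Positivity of [A] and [B] needs [Phi < 1], i.e. that the Gaussian mass is
   at most [1]; this follows from Feynman's identity
   [(int_0^x exp (- t^2))^2 + int_0^1 exp (- x^2 (1 + t^2)) / (1 + t^2) = pi / 4],
   whose left side has zero derivative. *)

Definition gauss (t : R) : R := exp (- (t * t)).
Definition gauss_int (x : R) : R := RInt gauss 0 x.
Definition feynman_integrand (x t : R) : R := exp (- (x * x * (1 + t * t))) / (1 + t * t).
Definition feynman (x : R) : R := RInt (feynman_integrand x) 0 1.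

Lemma one_add_sqr_pos (t : R) : 0 < 1 + t * t.
Proof. nra. Qed.

Lemma continuous_gauss (t : R) : continuous gauss t.
Proof.
  apply (ex_derive_continuous (K := R_AbsRing) (V := R_NormedModule)).
  unfold gauss. auto_derive. auto.
Qed.

Lemma ex_RInt_gauss (a b : R) : ex_RInt gauss a b.
Proof.
  apply (ex_RInt_continuous (V := R_CompleteNormedModule)).
  intros t _. apply continuous_gauss.
Qed.

Lemma is_derive_gauss_int (x : R) : is_derive gauss_int x (gauss x).
Proof.
  apply (is_derive_RInt _ _ 0).
  - apply filter_forall. intros b.
    apply (RInt_correct (V := R_CompleteNormedModule)), ex_RInt_gauss.
  - apply continuous_gauss.
Qed.

Lemma gauss_int_opp (x : R) : gauss_int (- x) = - gauss_int x.
Proof.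
  unfold gauss_int.
  replace (- x) with (-1 * x + 0) by ring.
  replace 0 with (-1 * 0 + 0) at 1 by ring.
  rewrite <- (RInt_comp_lin (V := R_CompleteNormedModule)) by apply ex_RInt_gauss.
  rewrite (RInt_ext _ (fun y => opp (gauss y))).
  - rewrite (RInt_opp (V := R_CompleteNormedModule)) by apply ex_RInt_gauss. reflexivity.
  - intros y _. unfold gauss, scal, opp; simpl; unfold mult; simpl.
    replace ((-1 * y + 0) * (-1 * y + 0)) with (y * y) by ring. ring.
Qed.

Lemma is_derive_feynman_integrand (x t : R) :
  is_derive (fun z => feynman_integrand z t) x (-2 * x * exp (- (x * x * (1 + t * t)))).
Proof.
  pose proof (one_add_sqr_pos t).
  unfold feynman_integrand. auto_derive; [lra | field; lra].
Qed.

(* The substitution [u = x t] turns the differentiated integrand into the Gaussian. *)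
Lemma RInt_feynman_derivative (x : R) :
  RInt (fun t => -2 * x * exp (- (x * x * (1 + t * t)))) 0 1 = -2 * gauss x * gauss_int x.
Proof.
  rewrite (RInt_ext _ (fun t => scal (-2 * gauss x) (scal x (gauss (x * t + 0))))).
  - rewrite (RInt_scal (V := R_CompleteNormedModule)).
    + rewrite (RInt_comp_lin (V := R_CompleteNormedModule)) by apply ex_RInt_gauss.
      rewrite Rmult_0_r, Rmult_1_r, !Rplus_0_r. reflexivity.
    + apply (ex_RInt_continuous (V := R_CompleteNormedModule)). intros t _.
      apply (ex_derive_continuous (K := R_AbsRing) (V := R_NormedModule)).
      unfold gauss, scal; simpl; unfold mult; simpl.
      auto_derive. auto.
  - intros t _. unfold scal; simpl; unfold mult; simpl; unfold gauss.
    replace (- (x * x * (1 + t * t))) with (- (x * x) + - ((x * t + 0) * (x * t + 0))) by ring.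
    rewrite exp_plus. ring.
Qed.

Lemma continuity_2d_feynman_derivative (x t : R) :
  continuity_2d_pt (fun u v => Derive (fun z => feynman_integrand z v) u) x t.
Proof.
  apply (continuity_2d_pt_ext (fun u v => -2 * u * exp (- (u * u * (1 + v * v))))).
  { intros u v. symmetry. apply is_derive_unique, is_derive_feynman_integrand. }
  apply continuity_2d_pt_mult.
  - apply continuity_2d_pt_mult; [apply continuity_2d_pt_const | apply continuity_2d_pt_id1].
  - apply (continuity_1d_2d_pt_comp exp).
    { apply derivable_continuous_pt, derivable_pt_exp. }
    apply continuity_2d_pt_opp, continuity_2d_pt_mult.
    + apply continuity_2d_pt_mult; apply continuity_2d_pt_id1.
    + apply continuity_2d_pt_plus; [apply continuity_2d_pt_const |].
      apply continuity_2d_pt_mult; apply continuity_2d_pt_id2.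
Qed.

Lemma is_derive_feynman (x : R) : is_derive feynman x (-2 * gauss x * gauss_int x).
Proof.
  rewrite <- RInt_feynman_derivative.
  rewrite (RInt_ext _ (fun t => Derive (fun z => feynman_integrand z t) x)).
  2:{ intros t _. symmetry. apply is_derive_unique, is_derive_feynman_integrand. }
  apply is_derive_RInt_param.
  - apply filter_forall. intros y t _. eexists. apply is_derive_feynman_integrand.
  - intros t _. apply continuity_2d_feynman_derivative.
  - apply filter_forall. intros y.
    apply (ex_RInt_continuous (V := R_CompleteNormedModule)). intros t _.
    pose proof (one_add_sqr_pos t).
    apply (ex_derive_continuous (K := R_AbsRing) (V := R_NormedModule)).
    unfold feynman_integrand. auto_derive. lra.
Qed.

Lemma feynman_0 : feynman 0 = PI / 4.
Proof.
  unfold feynman. rewrite (RInt_ext _ (fun t => / (1 + t²))).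
  2:{ intros t _. unfold feynman_integrand, Rsqr, Rdiv.
      replace (- (0 * 0 * (1 + t * t))) with 0 by ring. rewrite exp_0. apply Rmult_1_l. }
  apply is_RInt_unique.
  replace (PI / 4) with (minus (atan 1) (atan 0))
    by (rewrite atan_1, atan_0; unfold minus, plus, opp; simpl; lra).
  apply (is_RInt_derive (V := R_CompleteNormedModule)).
  - intros t _. apply is_derive_atan.
  - intros t _. pose proof (one_add_sqr_pos t).
    apply (ex_derive_continuous (K := R_AbsRing) (V := R_NormedModule)).
    auto_derive. unfold Rsqr. lra.
Qed.

Lemma gauss_int_sqr_add_feynman (x : R) : gauss_int x * gauss_int x + feynman x = PI / 4.
Proof.
  set (G z := gauss_int z * gauss_int z + feynman z).
  assert (G0 : G 0 = PI / 4).
  { unfold G, gauss_int. rewrite RInt_point, feynman_0. change (0 * 0 + PI / 4 = PI / 4). ring. }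
  assert (dG : forall y, is_derive G y zero).
  { intros y.
    pose proof (is_derive_plus _ _ _ _ _
      (is_derive_mult _ _ _ _ _ (is_derive_gauss_int y) (is_derive_gauss_int y) Rmult_comm)
      (is_derive_feynman y)) as H.
    unfold plus, mult in H; simpl in H.
    replace (gauss y * gauss_int y + gauss_int y * gauss y + -2 * gauss y * gauss_int y)
      with 0 in H by ring.
    exact H. }
  change (G x = PI / 4). rewrite <- G0.
  destruct (Rtotal_order x 0) as [Hx | [-> | Hx]].
  - apply (eq_is_derive G); auto.
  - reflexivity.
  - symmetry. apply (eq_is_derive G); auto.
Qed.
Lemma feynman_pos (x : R) : 0 < feynman x.
Proof.
  unfold feynman. apply RInt_gt_0; [lra | |].
  - intros t _. apply Rdiv_lt_0_compat; [apply exp_pos | apply one_add_sqr_pos].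
  - intros t _. pose proof (one_add_sqr_pos t).
    apply (ex_derive_continuous (K := R_AbsRing) (V := R_NormedModule)).
    unfold feynman_integrand. auto_derive. lra.
Qed.

Lemma gauss_int_lt (x : R) : gauss_int x < sqrt PI / 2.
Proof.
  pose proof (gauss_int_sqr_add_feynman x). pose proof (feynman_pos x).
  pose proof (sqrt_lt_R0 _ PI_RGT_0). pose proof (sqrt_sqrt PI (Rlt_le _ _ PI_RGT_0)).
  nra.
Qed.

Lemma RInt_gauss_lt (a b : R) : RInt gauss a b < sqrt PI.
Proof.
  rewrite <- (RInt_Chasles (V := R_CompleteNormedModule) gauss a 0 b) by apply ex_RInt_gauss.
  rewrite <- (opp_RInt_swap (V := R_CompleteNormedModule)) by apply ex_RInt_gauss.
  change (- gauss_int a + gauss_int b < sqrt PI).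
  rewrite <- gauss_int_opp. pose proof (gauss_int_lt (- a)). pose proof (gauss_int_lt b). lra.
Qed.

Lemma continuous_phi_std (t : R) : continuous phi_std t.
Proof.
  apply (ex_derive_continuous (K := R_AbsRing) (V := R_NormedModule)).
  unfold phi_std. auto_derive.
  assert (0 < sqrt (2 * PI)) by (apply sqrt_lt_R0; pose proof PI_RGT_0; lra). lra.
Qed.

Lemma ex_RInt_phi_std (a b : R) : ex_RInt phi_std a b.
Proof.
  apply (ex_RInt_continuous (V := R_CompleteNormedModule)).
  intros t _. apply continuous_phi_std.
Qed.

Lemma phi_std_pos (t : R) : 0 < phi_std t.
Proof.
  unfold phi_std. apply Rdiv_lt_0_compat; [apply exp_pos |].
  apply sqrt_lt_R0. pose proof PI_RGT_0. lra.
Qed.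

Lemma RInt_phi_std_gauss (a b : R) :
  RInt phi_std a b = / sqrt PI * RInt gauss (/ sqrt 2 * a + 0) (/ sqrt 2 * b + 0).
Proof.
  pose proof (sqrt_lt_R0 2 ltac:(lra)). pose proof (sqrt_lt_R0 _ PI_RGT_0).
  rewrite (RInt_ext _ (fun t => scal (/ sqrt PI) (scal (/ sqrt 2) (gauss (/ sqrt 2 * t + 0))))).
  - rewrite (RInt_scal (V := R_CompleteNormedModule)).
    + rewrite (RInt_comp_lin (V := R_CompleteNormedModule)) by apply ex_RInt_gauss.
      reflexivity.
    + apply (ex_RInt_continuous (V := R_CompleteNormedModule)). intros t _.
      apply (ex_derive_continuous (K := R_AbsRing) (V := R_NormedModule)).
      unfold gauss, scal; simpl; unfold mult; simpl. auto_derive. auto.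
  - intros t _. unfold scal; simpl; unfold mult; simpl. unfold phi_std, gauss.
    rewrite sqrt_mult_alt by lra.
    replace (- t ^ 2 / 2) with (- ((/ sqrt 2 * t + 0) * (/ sqrt 2 * t + 0))).
    + field. lra.
    + field_simplify; [| lra]. rewrite pow2_sqrt by lra. field.
Qed.

Lemma RInt_phi_std_lt_1 (a b : R) : RInt phi_std a b < 1.
Proof.
  pose proof (sqrt_lt_R0 _ PI_RGT_0).
  rewrite RInt_phi_std_gauss.
  apply (Rmult_lt_reg_l (sqrt PI)); [lra |].
  rewrite <- Rmult_assoc, Rinv_r, Rmult_1_l, Rmult_1_r by lra.
  apply RInt_gauss_lt.
Qed.

Lemma RInt_phi_std_Chasles (a b c : R) :
  RInt phi_std a b + RInt phi_std b c = RInt phi_std a c.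
Proof. apply (RInt_Chasles (V := R_CompleteNormedModule)); apply ex_RInt_phi_std. Qed.

Lemma RInt_phi_std_pos (a b : R) : a < b -> 0 < RInt phi_std a b.
Proof.
  intros Hab. apply RInt_gt_0; auto.
  - intros t _. apply phi_std_pos.
  - intros t _. apply continuous_phi_std.
Qed.

Definition left_masses (v : R) : Prop := exists X, X <= 0 /\ v = RInt phi_std X 0.

Lemma RInt_phi_std_0_antitone (X Y : R) : X <= Y -> RInt phi_std Y 0 <= RInt phi_std X 0.
Proof.
  intros [HXY | ->]; [| lra].
  rewrite <- (RInt_phi_std_Chasles X Y 0). pose proof (RInt_phi_std_pos X Y HXY). lra.
Qed.

Lemma left_masses_lub : exists l, is_lub left_masses l.
Proof.
  destruct (completeness left_masses) as [l Hl].
  - exists 1. intros v [X [_ ->]]. left. apply RInt_phi_std_lt_1.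
  - exists (RInt phi_std 0 0). exists 0. split; [lra | reflexivity].
  - exists l. exact Hl.
Qed.

Section LeftTail.

Variable l : R.
Hypothesis l_lub : is_lub left_masses l.

Lemma is_RInt_gen_left_tail : is_RInt_gen phi_std (Rbar_locally m_infty) (at_point 0) l.
Proof.
  intros P [eps HP].
  assert (HX0 : exists X0, X0 <= 0 /\ l - eps < RInt phi_std X0 0).
  { apply NNPP. intros Hn.
    assert (l <= l - eps).
    { apply l_lub. intros v [X [HX ->]]. apply Rnot_lt_le. intros Hlt. apply Hn. exists X. auto. }
    destruct eps; simpl in *; lra. }
  destruct HX0 as [X0 [HX0 HX0']].
  apply Filter_prod with (Q := fun X => X < X0) (R := fun b => b = 0).
  - exists X0. auto.
  - reflexivity.
  - intros X b HX ->. simpl. exists (RInt phi_std X 0). split.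
    + apply (RInt_correct (V := R_CompleteNormedModule)), ex_RInt_phi_std.
    + apply HP. unfold ball; simpl. unfold AbsRing_ball, abs, minus, plus, opp; simpl.
      assert (RInt phi_std X 0 <= l) by (apply l_lub; exists X; split; lra).
      pose proof (RInt_phi_std_0_antitone X X0 (Rlt_le _ _ HX)).
      apply Rabs_def1; lra.
Qed.

Lemma Phi_eq_left_tail (y : R) : Phi y = l + RInt phi_std 0 y.
Proof.
  unfold Phi. apply is_RInt_gen_unique.
  apply (is_RInt_gen_Chasles (V := R_NormedModule) _ 0 l).
  - apply is_RInt_gen_left_tail.
  - apply is_RInt_gen_at_point, (RInt_correct (V := R_CompleteNormedModule)), ex_RInt_phi_std.
Qed.

(* The mass between [min X y] and [|y| + 1] is below [1], and it exceeds the mass up to [y]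
   by the fixed positive amount carried by [[y, |y| + 1]]. *)
Lemma left_tail_add_lt_1 (y : R) : l + RInt phi_std 0 y < 1.
Proof.
  set (c := RInt phi_std y (Rabs y + 1)).
  assert (Hc : 0 < c) by (apply RInt_phi_std_pos; pose proof (Rle_abs y); lra).
  assert (l <= 1 - c - RInt phi_std 0 y).
  { apply l_lub. intros v [X [HX ->]].
    pose proof (RInt_phi_std_0_antitone (Rmin X y) X (Rmin_l X y)).
    pose proof (RInt_phi_std_lt_1 (Rmin X y) (Rabs y + 1)) as Hlt.
    rewrite <- (RInt_phi_std_Chasles (Rmin X y) 0 (Rabs y + 1)),
            <- (RInt_phi_std_Chasles 0 y (Rabs y + 1)) in Hlt.
    fold c in Hlt. lra. }
  lra.
Qed.

End LeftTail.

Lemma Phi_lt_1 (y : R) : Phi y < 1.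
Proof.
  destruct left_masses_lub as [l Hl].
  rewrite (Phi_eq_left_tail l Hl). apply left_tail_add_lt_1, Hl.
Qed.

Lemma Phi_increasing (a b : R) : a < b -> Phi a < Phi b.
Proof.
  intros Hab. destruct left_masses_lub as [l Hl].
  rewrite !(Phi_eq_left_tail l Hl), <- (RInt_phi_std_Chasles 0 a b).
  pose proof (RInt_phi_std_pos a b Hab). lra.
Qed.

Lemma is_derive_survival (c x : R) : x <> 0 ->
  is_derive (fun z => 1 - Phi (c / z)) x (phi_std (c / x) * (c / (x * x))).
Proof.
  intros Hx. destruct left_masses_lub as [l Hl].
  apply (is_derive_ext (fun z => 1 - (l + RInt phi_std 0 (c / z)))).
  { intros z. rewrite (Phi_eq_left_tail l Hl). reflexivity. }
  auto_derive.
  - repeat split; auto.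
    + apply ex_RInt_phi_std.
    + apply filter_forall. intros t. apply continuity_pt_filterlim, continuous_phi_std.
  - unfold Rdiv. field. exact Hx.
Qed.

Section Posteriors.

Variables lam pi q : R.

Definition mixture (A B : R) : R := lam * A + (1 - lam) * B.

(* For [q = (1 - pi) p], clearing the denominator [pi * mixture A B + q] of [e*] gives
   [1 - e* lam = (1 - lam) jminus_den A B / (pi * mixture A B + q)] and
   [1 - e* pH = (1 - lam) jminus_num A B / (mixture A B * (pi * mixture A B + q))]. *)
Definition jminus_den (A B : R) : R := pi * (lam * A + B) + q * (1 + lam).
Definition jminus_num (A B : R) : R := pi * B * (2 * lam * A + (1 - lam) * B) + q * (lam * A + B).

Definition jminus_weightA (A B : R) : R :=
  (pi * A + q) * jminus_den A B * B + pi * (A - B) * mixture A B * (pi * B + q).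
Definition jminus_weightB (A B : R) : R :=
  (pi * A + q) * (mixture A B * jminus_den A B
                  + (A - B) * ((1 - lam) * jminus_den A B + pi * mixture A B)).

Hypothesis lam_bounds : 0 < lam < 1.
Hypothesis pi_pos : 0 < pi.
Hypothesis q_pos : 0 < q.

Lemma mixture_pos (A B : R) : 0 < A -> 0 < B -> 0 < mixture A B.
Proof. intros. unfold mixture. nra. Qed.

Lemma jminus_den_pos (A B : R) : 0 < A -> 0 < B -> 0 < jminus_den A B.
Proof.
  intros. unfold jminus_den.
  assert (0 < pi * (lam * A + B)) by (apply Rmult_lt_0_compat; nra).
  assert (0 < q * (1 + lam)) by (apply Rmult_lt_0_compat; lra).
  lra.
Qed.

Lemma jminus_num_pos (A B : R) : 0 < A -> 0 < B -> 0 < jminus_num A B.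
Proof.
  intros. unfold jminus_num.
  assert (0 < pi * B * (2 * lam * A + (1 - lam) * B)) by (repeat apply Rmult_lt_0_compat; nra).
  assert (0 < q * (lam * A + B)) by (apply Rmult_lt_0_compat; nra).
  lra.
Qed.

Lemma jminus_weightA_pos (A B : R) : 0 < B < A -> 0 < jminus_weightA A B.
Proof.
  intros HB. pose proof (mixture_pos A B). pose proof (jminus_den_pos A B).
  unfold jminus_weightA.
  assert (0 < (pi * A + q) * jminus_den A B * B) by (repeat apply Rmult_lt_0_compat; nra).
  assert (0 < pi * (A - B) * mixture A B * (pi * B + q)) by (repeat apply Rmult_lt_0_compat; nra).
  lra.
Qed.

Lemma jminus_weightB_pos (A B : R) : 0 < B < A -> 0 < jminus_weightB A B.
Proof.
  intros HB. pose proof (mixture_pos A B). pose proof (jminus_den_pos A B).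
  unfold jminus_weightB. apply Rmult_lt_0_compat; [nra |].
  assert (0 < mixture A B * jminus_den A B) by (apply Rmult_lt_0_compat; lra).
  assert (0 < (A - B) * ((1 - lam) * jminus_den A B + pi * mixture A B)) by
    (apply Rmult_lt_0_compat; nra).
  lra.
Qed.

Section ChainRule.

Variables (fA fB : R -> R) (x dA dB : R).
Hypothesis dfA : is_derive fA x dA.
Hypothesis dfB : is_derive fB x dB.
Hypothesis fA_pos : 0 < fA x.
Hypothesis fB_pos : 0 < fB x.

Lemma is_derive_jplus :
  is_derive (fun z => ln (fA z / mixture (fA z) (fB z))) x
    ((1 - lam) * (fB x * dA - fA x * dB) / (fA x * mixture (fA x) (fB x))).
Proof.
  pose proof (mixture_pos _ _ fA_pos fB_pos). unfold mixture in *.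
  auto_derive.
  - repeat split; try (eexists; eassumption); try lra.
    apply Rdiv_lt_0_compat; lra.
  - replace (Derive (fun z => fA z) x) with dA by (symmetry; apply is_derive_unique, dfA).
    replace (Derive (fun z => fB z) x) with dB by (symmetry; apply is_derive_unique, dfB).
    field. lra.
Qed.

Lemma is_derive_jminus :
  is_derive
    (fun z => ln (jminus_num (fA z) (fB z) / (mixture (fA z) (fB z) * jminus_den (fA z) (fB z))))
    x
    (lam ^ 2 * (jminus_weightB (fA x) (fB x) * dB - jminus_weightA (fA x) (fB x) * dA)
     / (mixture (fA x) (fB x) * jminus_den (fA x) (fB x) * jminus_num (fA x) (fB x))).
Proof.
  pose proof (mixture_pos _ _ fA_pos fB_pos). pose proof (jminus_den_pos _ _ fA_pos fB_pos).
  pose proof (jminus_num_pos _ _ fA_pos fB_pos).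
  unfold jminus_weightA, jminus_weightB, mixture, jminus_den, jminus_num in *.
  auto_derive.
  - repeat split; try (eexists; eassumption).
    + apply Rgt_not_eq, Rmult_lt_0_compat; lra.
    + apply Rdiv_lt_0_compat; [lra | apply Rmult_lt_0_compat; lra].
  - replace (Derive (fun z => fA z) x) with dA by (symmetry; apply is_derive_unique, dfA).
    replace (Derive (fun z => fB z) x) with dB by (symmetry; apply is_derive_unique, dfB).
    field. lra.
Qed.

Hypothesis dA_neg : dA < 0.
Hypothesis dB_pos : 0 < dB.

Lemma jplus_slope_neg :
  (1 - lam) * (fB x * dA - fA x * dB) / (fA x * mixture (fA x) (fB x)) < 0.
Proof.
  pose proof (mixture_pos _ _ fA_pos fB_pos).
  assert (fB x * dA < 0) by nra. assert (0 < fA x * dB) by nra.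
  apply Rdiv_neg_pos; [nra | apply Rmult_lt_0_compat; lra].
Qed.

Lemma jminus_slope_pos : fB x < fA x ->
  0 < lam ^ 2 * (jminus_weightB (fA x) (fB x) * dB - jminus_weightA (fA x) (fB x) * dA)
      / (mixture (fA x) (fB x) * jminus_den (fA x) (fB x) * jminus_num (fA x) (fB x)).
Proof.
  intros HAB.
  pose proof (mixture_pos _ _ fA_pos fB_pos). pose proof (jminus_den_pos _ _ fA_pos fB_pos).
  pose proof (jminus_num_pos _ _ fA_pos fB_pos).
  pose proof (jminus_weightA_pos (fA x) (fB x)). pose proof (jminus_weightB_pos (fA x) (fB x)).
  apply Rdiv_lt_0_compat; [| repeat apply Rmult_lt_0_compat; lra].
  assert (jminus_weightA (fA x) (fB x) * dA < 0) by nra.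
  assert (0 < jminus_weightB (fA x) (fB x) * dB) by nra.
  apply Rmult_lt_0_compat; [nra | lra].
Qed.

End ChainRule.

End Posteriors.

Lemma survival_pos (c x : R) : 0 < 1 - Phi (c / x).
Proof. pose proof (Phi_lt_1 (c / x)). lra. Qed.

Lemma survival_slope_neg (c x : R) : c < 0 -> 0 < x -> phi_std (c / x) * (c / (x * x)) < 0.
Proof.
  intros Hc Hx. pose proof (phi_std_pos (c / x)).
  assert (c / (x * x) < 0) by (apply Rdiv_neg_pos; nra). nra.
Qed.

Lemma survival_slope_pos (c x : R) : 0 < c -> 0 < x -> 0 < phi_std (c / x) * (c / (x * x)).
Proof.
  intros Hc Hx. apply Rmult_lt_0_compat; [apply phi_std_pos | apply Rdiv_lt_0_compat; nra].
Qed.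

Lemma Bfun_lt_Afun (mu0 mu1 sH s : R) : mu0 < mu1 -> 0 < sH -> Bfun mu0 sH s < Afun mu1 sH s.
Proof.
  intros Hmu HsH. unfold Afun, Bfun.
  assert (Hcut : (s - mu1) / sH < (s - mu0) / sH)
    by (apply Rmult_lt_compat_r; [apply Rinv_0_lt_compat |]; lra).
  pose proof (Phi_increasing _ _ Hcut). lra.
Qed.

Lemma Jminus_eq (mu0 mu1 pi lam p s x : R) : 0 < lam < 1 -> 0 < pi < 1 -> 0 < p < 1 ->
  let A := Afun mu1 x s in let B := Bfun mu0 x s in let q := (1 - pi) * p in
  Jminus mu0 mu1 pi lam p s x
  = ln (jminus_num lam pi q A B / (mixture lam A B * jminus_den lam pi q A B)).
Proof.
  intros Hl Hpi Hp A B q.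
  assert (HA : 0 < A) by apply survival_pos. assert (HB : 0 < B) by apply survival_pos.
  assert (Hq : 0 < q) by (unfold q; nra).
  pose proof (mixture_pos lam Hl A B HA HB).
  pose proof (jminus_den_pos lam pi q Hl (proj1 Hpi) Hq A B HA HB).
  unfold Jminus, estar, pH, pL. fold A B q. f_equal.
  unfold mixture, jminus_den, jminus_num in *.
  assert (0 < pi * (lam * A + (1 - lam) * B) + q) by nra.
  field. repeat split; try lra. nra.
Qed.

Theorem lemmaD6 (mu0 mu1 pi lam p s sH : R) :
  mu0 < mu1 -> 0 < sH ->
  0 < pi < 1 -> 0 < lam < 1 -> 0 < p < 1 ->
  mu0 < s < mu1 ->
  (ex_derive (fun x => Jplus mu0 mu1 lam s x) sH /\
   Derive (fun x => Jplus mu0 mu1 lam s x) sH < 0) /\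
  (ex_derive (fun x => Jminus mu0 mu1 pi lam p s x) sH /\
   Derive (fun x => Jminus mu0 mu1 pi lam p s x) sH > 0).
Proof.
  intros Hmu HsH Hpi Hl Hp Hs.
  set (fA := fun z => Afun mu1 z s). set (fB := fun z => Bfun mu0 z s).
  assert (dfA := is_derive_survival (s - mu1) sH ltac:(lra)).
  assert (dfB := is_derive_survival (s - mu0) sH ltac:(lra)).
  assert (dA_neg := survival_slope_neg (s - mu1) sH ltac:(lra) HsH).
  assert (dB_pos := survival_slope_pos (s - mu0) sH ltac:(lra) HsH).
  assert (fA_pos : 0 < fA sH) by apply survival_pos.
  assert (fB_pos : 0 < fB sH) by apply survival_pos.
  assert (fB_lt_fA : fB sH < fA sH) by (apply Bfun_lt_Afun; lra).
  split.
  - pose proof (is_derive_jplus lam Hl fA fB sH _ _ dfA dfB fA_pos fB_pos) as J.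
    apply (is_derive_ext _ (fun x => Jplus mu0 mu1 lam s x)) in J; [| reflexivity].
    split; [eexists; exact J |].
    erewrite is_derive_unique by exact J.
    exact (jplus_slope_neg lam Hl fA fB sH _ _ fA_pos fB_pos dA_neg dB_pos).
  - set (q := (1 - pi) * p). assert (Hq : 0 < q) by (unfold q; nra).
    pose proof (is_derive_jminus lam pi q Hl (proj1 Hpi) Hq fA fB sH _ _ dfA dfB fA_pos fB_pos)
      as J.
    apply (is_derive_ext _ (fun x => Jminus mu0 mu1 pi lam p s x)) in J;
      [| intros z; symmetry; apply Jminus_eq; assumption].
    split; [eexists; exact J |].
    erewrite is_derive_unique by exact J.
    exact (jminus_slope_pos lam pi q Hl (proj1 Hpi) Hq fA fB sH _ _
             fA_pos fB_pos dA_neg dB_pos fB_lt_fA).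
Qed.
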